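(* Let $T>0$ and let $\mathbb{T}^2=(\mathbb{R}/T\mathbb{Z})\times(\mathbb{R}/2\pi\mathbb{Z})$ with coordinates $(t,x)$ and volume form $dV=dt\wedge dx$. Assume that $\mathcal{R}=\frac{2\pi}{T}$ has irrationality measure equal to $2$. Let \[ M_1=\begin{pmatrix}0&-1&0&0\\1&0&0&0\\0&0&0&1\\0&0&-1&0\end{pmatrix},\qquad M_2=\begin{pmatrix}0&0&1&0\\0&0&0&-1\\-1&0&0&0\\0&1&0&0\end{pmatrix}. \] Let $\widetilde{Z}:\mathbb{R}\times\mathbb{T}^2\to\mathbb{R}^4$ be a smooth map satisfying \[ \partial_s\widetilde{Z}(s,t,x)+M_1\partial_t\widetilde{Z}(s,t,x)+M_2\partial_x\widetilde{Z}(s,t,x)=0 \] for all $(s,t,x)$, with finite energy \[ E(\widetilde{Z})=\int_{-\infty}^{+\infty}\left(\int_{\mathbb{T}^2}|\partial_s\widetilde{Z}(s,t,x)|^2\,dV\right)ds<+\infty, \] and such that for every $s\in\mathbb{R}$ the map $\widetilde{Z}_s:=\widetilde{Z}(s,\cdot,\cdot)$ has mean zero, i.e. $\int_{\mathbb{T}^2}\widetilde{Z}_s\,dV=0$. Then $\lim_{s\to+\infty}\widetilde{Z}_s=0$ in $C^\infty(\mathbb{T}^2,\mathbb{R}^4)$.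
   Context: The irrationality measure of a real number $r$ is the infimum of all $\rho$ for which there exists a constant $c$ such that $\frac{c}{q^\rho}<|r-\frac{p}{q}|$ for all $\frac{p}{q}\in\mathbb{Q}$. The assumption that $\mathcal{R}$ has irrationality measure $2$ is a standing assumption of the section in which the lemma is stated. *)

From Stdlib Require Import Reals Lra ZArith.
From Coquelicot Require Import Coquelicot.
Open Scope R_scope.

Definition irr_exponent_ok (r rho : R) : Prop :=
  exists c : R, 0 < c /\
    forall (p : Z) (q : nat), (0 < q)%nat ->
      c / Rpower (INR q) rho < Rabs (r - IZR p / INR q).

Definition has_irrationality_measure (r mu : R) : Prop :=
  (forall rho, irr_exponent_ok r rho -> mu <= rho) /\
  (forall m, (forall rho, irr_exponent_ok r rho -> m <= rho) -> m <= mu).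

Inductive dir := dS | dT | dX.

Definition pD (d : dir) (f : R -> R -> R -> R) : R -> R -> R -> R :=
  match d with
  | dS => fun s t x => Derive (fun u => f u t x) s
  | dT => fun s t x => Derive (fun u => f s u x) t
  | dX => fun s t x => Derive (fun u => f s t u) x
  end.

Definition iterD (l : list dir) (f : R -> R -> R -> R) : R -> R -> R -> R :=
  List.fold_right pD f l.

Definition smooth3 (f : R -> R -> R -> R) : Prop :=
  forall l : list dir,
    (forall s t x,
        continuous (fun p : R * R * R => let '(s', t', x') := p in iterD l f s' t' x')
                   (s, t, x)) /\
    (forall s t x, ex_derive (fun u => iterD l f u t x) s /\
                   ex_derive (fun u => iterD l f s u x) t /\
                   ex_derive (fun u => iterD l f s t u) x).

Definition M1 (i j : nat) : R :=
  match i, j with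
  | 0%nat, 1%nat => -1 | 1%nat, 0%nat => 1 | 2%nat, 3%nat => 1
  | 3%nat, 2%nat => -1 | _, _ => 0
  end.

Definition M2 (i j : nat) : R :=
  match i, j with
  | 0%nat, 2%nat => 1 | 1%nat, 3%nat => -1 | 2%nat, 0%nat => -1
  | 3%nat, 1%nat => 1 | _, _ => 0
  end.

(** Integral over the torus (R/TZ) x (R/2piZ) with dV = dt dx, computed on the
    fundamental domain [0,T] x [0,2pi]. *)
Definition torus_int (T : R) (g : R -> R -> R) : R :=
  RInt (fun t => RInt (fun x => g t x) 0 (2 * PI)) 0 T.

Definition Dtx (a b : nat) (f : R -> R -> R -> R) : R -> R -> R -> R :=
  Nat.iter a (pD dT) (Nat.iter b (pD dX) f).

From Stdlib Require Import Reals Lra ZArith Lia List.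
From Stdlib Require Import ClassicalEpsilon FunctionalExtensionality Classical.
From Coquelicot Require Import Coquelicot.
Open Scope R_scope.

(* Write W = d_s Z and L = M1 d_t + M2 d_x, so that d_s W = - L W, where L is symmetric on
   the torus because M1 and M2 are antisymmetric.  The energy density e(s) = |W_s|^2_{L^2}
   then satisfies e'' = 4 |d_s W_s|^2_{L^2} >= 0, and a nonnegative convex function with
   finite integral over the line vanishes; so W = 0 and L Z = 0.  The combinations Z0 +- Z3
   and Z1 +- Z2 are then constant along the lines x +- t = const, so on each line t = const
   they have the two periods T and 2 pi, whose ratio is irrational since its irrationality
   measure is finite.  Hence each Z_s is constant, and zero by the mean-zero condition: Z
   vanishes identically, which is stronger than the claimed convergence. *)

Definition continuous3 (f : R -> R -> R -> R) : Prop :=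
  forall s t x,
    continuous (fun p : R * R * R => f (fst (fst p)) (snd (fst p)) (snd p)) (s, t, x).

Lemma continuous3_eps f : continuous3 f -> forall s t x (eps : posreal),
  exists d : posreal, forall s' t' x',
    Rabs (s' - s) < d -> Rabs (t' - t) < d -> Rabs (x' - x) < d ->
    Rabs (f s' t' x' - f s t x) < eps.
Proof.
  intros Hf s t x eps.
  destruct (proj1 (filterlim_locally _ _) (Hf s t x) eps) as [d Hd].
  exists d. intros s' t' x' Hs Ht Hx.
  apply (Hd (s', t', x')). repeat split; assumption.
Qed.

Lemma Rabs_minus_diag_lt (d : posreal) (a : R) : Rabs (a - a) < d.
Proof. rewrite Rminus_eq_0, Rabs_R0. apply cond_pos. Qed.

Lemma continuous3_st f s t x : continuous3 f -> continuity_2d_pt (fun u v => f u v x) s t.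
Proof.
  intros Hf eps. destruct (continuous3_eps f Hf s t x eps) as [d Hd].
  exists d. intros u v Hu Hv. apply Hd; auto using Rabs_minus_diag_lt.
Qed.

Lemma continuous3_sx f s t x : continuous3 f -> continuity_2d_pt (fun u v => f u t v) s x.
Proof.
  intros Hf eps. destruct (continuous3_eps f Hf s t x eps) as [d Hd].
  exists d. intros u v Hu Hv. apply Hd; auto using Rabs_minus_diag_lt.
Qed.

Lemma continuous3_tx f s t x : continuous3 f -> continuity_2d_pt (fun u v => f s u v) t x.
Proof.
  intros Hf eps. destruct (continuous3_eps f Hf s t x eps) as [d Hd].
  exists d. intros u v Hu Hv. apply Hd; auto using Rabs_minus_diag_lt.
Qed.

Lemma continuity_2d_pt_snd h u v : continuity_2d_pt h u v -> continuous (fun v => h u v) v.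
Proof.
  intros H. apply filterlim_locally. intros eps. destruct (H eps) as [d Hd].
  exists d. intros y Hy. apply Hd; [apply Rabs_minus_diag_lt | exact Hy].
Qed.

Lemma continuous3_x f s t x : continuous3 f -> continuous (fun x => f s t x) x.
Proof. intros Hf. apply (continuity_2d_pt_snd (fun u v => f s u v)), continuous3_tx, Hf. Qed.

Lemma continuous3_plus f g :
  continuous3 f -> continuous3 g -> continuous3 (fun s t x => f s t x + g s t x).
Proof.
  intros Hf Hg s t x.
  exact (@continuous_plus _ R_AbsRing R_NormedModule _ _ _ (Hf s t x) (Hg s t x)).
Qed.

Lemma continuous3_mult f g :
  continuous3 f -> continuous3 g -> continuous3 (fun s t x => f s t x * g s t x).
Proof.
  intros Hf Hg s t x. exact (@continuous_mult _ R_AbsRing _ _ _ (Hf s t x) (Hg s t x)).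
Qed.

Lemma continuous3_scal c f : continuous3 f -> continuous3 (fun s t x => c * f s t x).
Proof.
  intros Hf. apply (continuous3_mult (fun _ _ _ => c) f); [|exact Hf].
  intros s t x. apply continuous_const.
Qed.

Lemma ex_RInt_continuous_everywhere (f : R -> R) a b :
  (forall z, continuous f z) -> ex_RInt f a b.
Proof.
  intros H. apply (@ex_RInt_continuous R_CompleteNormedModule). intros z _. apply H.
Qed.

Lemma continuity_2d_pt_RInt_param (g : R -> R -> R -> R) a b : a <= b -> continuous3 g ->
  forall s t, continuity_2d_pt (fun s t => RInt (fun x => g s t x) a b) s t.
Proof.
  intros Hab Hg s t eps.
  assert (He : 0 < eps / (2 * (b - a) + 2)).
  { apply Rdiv_lt_0_compat; [apply cond_pos | lra]. }
  set (e := mkposreal _ He).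
  (* a modulus of continuity of [g] at each [(s, t, x)], glued by compactness of [[a, b]] *)
  assert (Hd : forall x, exists d : posreal, forall s' t' x',
    Rabs (s' - s) < d -> Rabs (t' - t) < d -> Rabs (x' - x) < d ->
    Rabs (g s' t' x' - g s t x) < e) by (intros x; apply continuous3_eps, Hg).
  set (delta := fun x => proj1_sig (constructive_indefinite_description _ (Hd x))).
  assert (Hdelta : forall x s' t' x',
    Rabs (s' - s) < delta x -> Rabs (t' - t) < delta x -> Rabs (x' - x) < delta x ->
    Rabs (g s' t' x' - g s t x) < e).
  { intros x. unfold delta.
    destruct (constructive_indefinite_description _ (Hd x)) as [d Hd']. exact Hd'. }
  destruct (compactness_value_1d a b delta) as [d Hcd].
  exists d. intros u v Hu Hv.
  assert (Hpt : forall x, a <= x <= b -> Rabs (g u v x - g s t x) <= 2 * e).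
  { intros x Hx. apply Rnot_lt_le. intros Hlt. apply (Hcd x Hx). intros [y [Hy [Hxy Hdy]]].
    assert (H1 : Rabs (g u v x - g s t y) < e) by (apply Hdelta; lra).
    assert (H2 : Rabs (g s t x - g s t y) < e)
      by (apply Hdelta; rewrite ?Rminus_eq_0, ?Rabs_R0; try lra; apply cond_pos).
    apply (Rlt_not_le _ _ Hlt).
    replace (g u v x - g s t x) with ((g u v x - g s t y) + - (g s t x - g s t y)) by ring.
    eapply Rle_trans; [apply Rabs_triang|]. rewrite Rabs_Ropp. lra. }
  assert (Ex1 : ex_RInt (fun x => g u v x) a b)
    by (apply ex_RInt_continuous_everywhere; intros; apply continuous3_x, Hg).
  assert (Ex2 : ex_RInt (fun x => g s t x) a b)
    by (apply ex_RInt_continuous_everywhere; intros; apply continuous3_x, Hg).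
  assert (Hminus : RInt (fun x => g u v x - g s t x) a b
                   = RInt (fun x => g u v x) a b - RInt (fun x => g s t x) a b)
    by exact (@RInt_minus R_CompleteNormedModule _ _ _ _ Ex1 Ex2).
  rewrite <- Hminus.
  eapply Rle_lt_trans.
  { apply abs_RInt_le_const with (M := 2 * e); auto.
    exact (@ex_RInt_minus R_NormedModule _ _ _ _ Ex1 Ex2). }
  simpl. apply Rmult_lt_reg_r with (2 * (b - a) + 2); [lra|].
  field_simplify; try lra. pose proof (cond_pos eps). nra.
Qed.

Lemma is_derive_RInt_param_continuous (f : R -> R -> R) a b u0 :
  (forall u x, ex_derive (fun z => f z x) u) ->
  (forall u x, continuity_2d_pt f u x) ->
  (forall u x, continuity_2d_pt (fun u x => Derive (fun z => f z x) u) u x) ->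
  is_derive (fun u => RInt (fun x => f u x) a b) u0
            (RInt (fun x => Derive (fun z => f z x) u0) a b).
Proof.
  intros H1 H2 H3. apply is_derive_RInt_param.
  - apply filter_forall. intros; apply H1.
  - intros; apply H3.
  - apply filter_forall. intros y. apply ex_RInt_continuous_everywhere. intros z.
    apply (continuity_2d_pt_snd f), H2.
Qed.

Definition add3 (f g : R -> R -> R -> R) := fun s t x => f s t x + g s t x.
Definition mul3 (f g : R -> R -> R -> R) := fun s t x => f s t x * g s t x.
Definition scal3 (c : R) (f : R -> R -> R -> R) := fun s t x => c * f s t x.

Lemma funext3 (f g : R -> R -> R -> R) : (forall s t x, f s t x = g s t x) -> f = g.
Proof.
  intros H. do 3 (apply functional_extensionality; intro). apply H.
Qed.

Definition ex_pD (d : dir) (f : R -> R -> R -> R) : Prop :=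
  forall s t x, match d with
  | dS => ex_derive (fun u => f u t x) s
  | dT => ex_derive (fun u => f s u x) t
  | dX => ex_derive (fun u => f s t u) x
  end.

Definition C1_3 (f : R -> R -> R -> R) : Prop :=
  continuous3 f /\ forall d, ex_pD d f /\ continuous3 (pD d f).

Lemma ex_pD_add3 d f g : ex_pD d f -> ex_pD d g -> ex_pD d (add3 f g).
Proof.
  intros H1 H2 s t x. specialize (H1 s t x). specialize (H2 s t x).
  destruct d; exact (ex_derive_plus _ _ _ H1 H2).
Qed.

Lemma ex_pD_mul3 d f g : ex_pD d f -> ex_pD d g -> ex_pD d (mul3 f g).
Proof.
  intros H1 H2 s t x. specialize (H1 s t x). specialize (H2 s t x).
  destruct d; exact (ex_derive_mult _ _ _ H1 H2).
Qed.

Lemma ex_pD_scal3 d c f : ex_pD d f -> ex_pD d (scal3 c f).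
Proof.
  intros H s t x. specialize (H s t x). destruct d; exact (ex_derive_scal _ c _ H).
Qed.

Lemma pD_add3 d f g : ex_pD d f -> ex_pD d g -> pD d (add3 f g) = add3 (pD d f) (pD d g).
Proof.
  intros H1 H2. apply funext3. intros s t x. specialize (H1 s t x). specialize (H2 s t x).
  destruct d; exact (Derive_plus _ _ _ H1 H2).
Qed.

Lemma pD_mul3 d f g : ex_pD d f -> ex_pD d g ->
  pD d (mul3 f g) = add3 (mul3 (pD d f) g) (mul3 f (pD d g)).
Proof.
  intros H1 H2. apply funext3. intros s t x. specialize (H1 s t x). specialize (H2 s t x).
  destruct d; exact (Derive_mult _ _ _ H1 H2).
Qed.

Lemma pD_scal3 d c f : pD d (scal3 c f) = scal3 c (pD d f).
Proof. apply funext3. intros s t x. destruct d; apply Derive_scal. Qed.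

Lemma C1_3_add3 f g : C1_3 f -> C1_3 g -> C1_3 (add3 f g).
Proof.
  intros [Cf Df] [Cg Dg]. split; [apply continuous3_plus; auto|].
  intros d. destruct (Df d), (Dg d). split; [apply ex_pD_add3; auto|].
  rewrite pD_add3 by auto. apply continuous3_plus; auto.
Qed.

Lemma C1_3_mul3 f g : C1_3 f -> C1_3 g -> C1_3 (mul3 f g).
Proof.
  intros [Cf Df] [Cg Dg]. split; [apply continuous3_mult; auto|].
  intros d. destruct (Df d), (Dg d). split; [apply ex_pD_mul3; auto|].
  rewrite pD_mul3 by auto. apply continuous3_plus; apply continuous3_mult; auto.
Qed.

Lemma C1_3_scal3 c f : C1_3 f -> C1_3 (scal3 c f).
Proof.
  intros [Cf Df]. split; [apply continuous3_scal; auto|].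
  intros d. destruct (Df d). split; [apply ex_pD_scal3; auto|].
  rewrite pD_scal3. apply continuous3_scal; auto.
Qed.

Lemma continuous3_iterD f l : smooth3 f -> continuous3 (iterD l f).
Proof.
  intros H s t x. eapply continuous_ext; [| apply (proj1 (H l) s t x)].
  intros [[a b] c]. reflexivity.
Qed.

Lemma C1_3_iterD f l : smooth3 f -> C1_3 (iterD l f).
Proof.
  intros H. split; [apply continuous3_iterD; auto|].
  intros d. split.
  - intros s t x. destruct (proj2 (H l) s t x) as [? [? ?]]. destruct d; auto.
  - apply (continuous3_iterD f (d :: l)), H.
Qed.

Lemma smooth3_pD f d : smooth3 f -> smooth3 (pD d f).
Proof.
  intros H l. replace (iterD l (pD d f)) with (iterD (l ++ d :: nil) f); [apply H|].
  unfold iterD. rewrite fold_right_app. reflexivity.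
Qed.

Lemma C1_3_of_smooth3 f : smooth3 f -> C1_3 f.
Proof. apply (C1_3_iterD f nil). Qed.

Lemma ex_pD_of_smooth3 f d : smooth3 f -> ex_pD d f.
Proof. intros H. apply (proj2 (C1_3_of_smooth3 f H)). Qed.

Lemma pD_dS_dT_comm f : smooth3 f -> forall s t x, pD dS (pD dT f) s t x = pD dT (pD dS f) s t x.
Proof.
  intros H s t x. apply (Schwarz (fun u v => f u v x) s t).
  - exists (mkposreal 1 Rlt_0_1). intros u v _ _. repeat split.
    + apply (ex_pD_of_smooth3 f dS H u v x).
    + apply (ex_pD_of_smooth3 f dT H u v x).
    + apply (ex_pD_of_smooth3 (pD dT f) dS (smooth3_pD f dT H) u v x).
    + apply (ex_pD_of_smooth3 (pD dS f) dT (smooth3_pD f dS H) u v x).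
  - apply (continuous3_st (iterD (dS :: dT :: nil) f)), continuous3_iterD, H.
  - apply (continuous3_st (iterD (dT :: dS :: nil) f)), continuous3_iterD, H.
Qed.

Lemma pD_dS_dX_comm f : smooth3 f -> forall s t x, pD dS (pD dX f) s t x = pD dX (pD dS f) s t x.
Proof.
  intros H s t x. apply (Schwarz (fun u v => f u t v) s x).
  - exists (mkposreal 1 Rlt_0_1). intros u v _ _. repeat split.
    + apply (ex_pD_of_smooth3 f dS H u t v).
    + apply (ex_pD_of_smooth3 f dX H u t v).
    + apply (ex_pD_of_smooth3 (pD dX f) dS (smooth3_pD f dX H) u t v).
    + apply (ex_pD_of_smooth3 (pD dS f) dX (smooth3_pD f dS H) u t v).
  - apply (continuous3_sx (iterD (dS :: dX :: nil) f)), continuous3_iterD, H.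
  - apply (continuous3_sx (iterD (dX :: dS :: nil) f)), continuous3_iterD, H.
Qed.

(** * Integrals over the torus *)

Lemma two_PI_gt_0 : 0 < 2 * PI.
Proof. pose proof PI_RGT_0. lra. Qed.

Lemma continuity_2d_pt_torus_inner f s t : continuous3 f ->
  continuity_2d_pt (fun s t => RInt (fun x => f s t x) 0 (2 * PI)) s t.
Proof.
  intros Hf. apply continuity_2d_pt_RInt_param; [apply Rlt_le, two_PI_gt_0 | exact Hf].
Qed.

Lemma ex_RInt_torus_inner f s t : continuous3 f -> ex_RInt (fun x => f s t x) 0 (2 * PI).
Proof. intros Hf. apply ex_RInt_continuous_everywhere. intros. apply continuous3_x, Hf. Qed.

Lemma ex_RInt_torus_outer T f s : continuous3 f ->
  ex_RInt (fun t => RInt (fun x => f s t x) 0 (2 * PI)) 0 T.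
Proof.
  intros Hf. apply ex_RInt_continuous_everywhere. intros z.
  apply (continuity_2d_pt_snd (fun s t => RInt (fun x => f s t x) 0 (2 * PI))).
  apply continuity_2d_pt_torus_inner, Hf.
Qed.

Lemma torus_int_add3 T f g s : continuous3 f -> continuous3 g ->
  torus_int T (add3 f g s) = torus_int T (f s) + torus_int T (g s).
Proof.
  intros Hf Hg. unfold torus_int, add3.
  rewrite (RInt_ext _ (fun t => RInt (fun x => f s t x) 0 (2 * PI)
                                + RInt (fun x => g s t x) 0 (2 * PI))).
  - exact (@RInt_plus R_CompleteNormedModule _ _ _ _
             (ex_RInt_torus_outer T f s Hf) (ex_RInt_torus_outer T g s Hg)).
  - intros t _. exact (@RInt_plus R_CompleteNormedModule _ _ _ _
             (ex_RInt_torus_inner f s t Hf) (ex_RInt_torus_inner g s t Hg)).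
Qed.

Lemma torus_int_scal3 T c f s : continuous3 f ->
  torus_int T (scal3 c f s) = c * torus_int T (f s).
Proof.
  intros Hf. unfold torus_int, scal3.
  rewrite (RInt_ext _ (fun t => c * RInt (fun x => f s t x) 0 (2 * PI))).
  - exact (@RInt_scal R_CompleteNormedModule _ _ _ _ (ex_RInt_torus_outer T f s Hf)).
  - intros t _. exact (@RInt_scal R_CompleteNormedModule _ _ _ _ (ex_RInt_torus_inner f s t Hf)).
Qed.

Lemma torus_int_const T c : torus_int T (fun _ _ => c) = c * (2 * PI) * T.
Proof. unfold torus_int. rewrite !RInt_const. unfold scal; simpl. unfold mult; simpl. ring. Qed.

Lemma torus_int_ge_0 T f s : 0 <= T -> continuous3 f -> (forall t x, 0 <= f s t x) ->
  0 <= torus_int T (f s).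
Proof.
  intros HT Hf Hpos. apply RInt_ge_0; auto using ex_RInt_torus_outer.
  intros t _. apply RInt_ge_0; auto using ex_RInt_torus_inner.
  apply Rlt_le, two_PI_gt_0.
Qed.

Lemma RInt_gt_0_of_point (g : R -> R) a b x0 : a < b -> (forall z, continuous g z) ->
  (forall z, 0 <= g z) -> a <= x0 <= b -> 0 < g x0 -> 0 < RInt g a b.
Proof.
  intros Hab Hc Hp Hx Hg.
  assert (Hg2 : 0 < g x0 / 2) by lra.
  destruct (proj1 (filterlim_locally _ _) (Hc x0) (mkposreal _ Hg2)) as [d Hd].
  assert (Hnear : forall y, Rabs (y - x0) < d -> g x0 / 2 < g y).
  { intros y Hy. specialize (Hd y Hy). apply Rabs_def2 in Hd. simpl in Hd.
    unfold minus, plus, opp in Hd; simpl in Hd. lra. }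
  pose proof (cond_pos d).
  set (lo := Rmax a (x0 - d / 2)). set (hi := Rmin b (x0 + d / 2)).
  assert (Hbounds : a <= lo /\ x0 - d / 2 <= lo /\ hi <= b /\ hi <= x0 + d / 2 /\ lo < hi)
    by (unfold lo, hi, Rmax, Rmin; repeat destruct Rle_dec; lra).
  assert (Hex : forall u v, ex_RInt g u v) by (intros; apply ex_RInt_continuous_everywhere; auto).
  rewrite <- (RInt_Chasles g a lo b), <- (RInt_Chasles g lo hi b) by auto.
  assert (0 <= RInt g a lo) by (apply RInt_ge_0; auto; lra).
  assert (0 <= RInt g hi b) by (apply RInt_ge_0; auto; lra).
  assert (Hmid : RInt (fun _ => g x0 / 2) lo hi <= RInt g lo hi).
  { apply RInt_le; auto; [lra | apply ex_RInt_const |].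
    intros y Hy. apply Rlt_le, Hnear, Rabs_def1; lra. }
  rewrite RInt_const in Hmid.
  unfold scal in Hmid; simpl in Hmid; unfold mult in Hmid; simpl in Hmid.
  unfold plus; simpl.
  assert (0 < (hi - lo) * (g x0 / 2)) by (apply Rmult_lt_0_compat; lra).
  lra.
Qed.

Lemma torus_int_gt_0 T f s t0 x0 : 0 < T -> continuous3 f -> (forall t x, 0 <= f s t x) ->
  0 <= t0 <= T -> 0 <= x0 <= 2 * PI -> 0 < f s t0 x0 -> 0 < torus_int T (f s).
Proof.
  intros HT Hf Hpos Ht Hx Hf0. pose proof two_PI_gt_0.
  apply RInt_gt_0_of_point with t0; auto.
  - intros z. apply (continuity_2d_pt_snd (fun s t => RInt (fun x => f s t x) 0 (2 * PI))).
    apply continuity_2d_pt_torus_inner, Hf.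
  - intros z. apply RInt_ge_0; auto using ex_RInt_torus_inner; lra.
  - apply RInt_gt_0_of_point with x0; auto. intros z. apply continuous3_x, Hf.
Qed.

Lemma is_derive_torus_inner_s f t s0 : C1_3 f ->
  is_derive (fun s => RInt (fun x => f s t x) 0 (2 * PI)) s0
            (RInt (fun x => pD dS f s0 t x) 0 (2 * PI)).
Proof.
  intros [Hf Hd]. destruct (Hd dS) as [Hex Hc].
  apply (is_derive_RInt_param_continuous (fun u x => f u t x)).
  - intros u x. apply (Hex u t x).
  - intros u x. apply continuous3_sx, Hf.
  - intros u x. apply (continuous3_sx (pD dS f)), Hc.
Qed.

Lemma is_derive_torus_inner_t f s t0 : C1_3 f ->
  is_derive (fun t => RInt (fun x => f s t x) 0 (2 * PI)) t0
            (RInt (fun x => pD dT f s t0 x) 0 (2 * PI)).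
Proof.
  intros [Hf Hd]. destruct (Hd dT) as [Hex Hc].
  apply (is_derive_RInt_param_continuous (fun u x => f s u x)).
  - intros u x. apply (Hex s u x).
  - intros u x. apply continuous3_tx, Hf.
  - intros u x. apply (continuous3_tx (pD dT f)), Hc.
Qed.

Lemma is_derive_torus_int T f s0 : C1_3 f ->
  is_derive (fun s => torus_int T (f s)) s0 (torus_int T (pD dS f s0)).
Proof.
  intros Hf. unfold torus_int.
  set (h := fun s t => RInt (fun x => f s t x) 0 (2 * PI)).
  assert (Hh : forall s t, Derive (fun z => h z t) s = RInt (fun x => pD dS f s t x) 0 (2 * PI))
    by (intros; apply is_derive_unique, is_derive_torus_inner_s, Hf).
  rewrite (RInt_ext _ (fun t => Derive (fun z => h z t) s0)) by (intros; rewrite Hh; reflexivity).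
  apply (is_derive_RInt_param h 0 T s0).
  - apply filter_forall. intros y t _. eexists. apply is_derive_torus_inner_s, Hf.
  - intros t _.
    apply continuity_2d_pt_ext with (f := fun u v => RInt (fun x => pD dS f u v x) 0 (2 * PI)).
    + intros; rewrite Hh; reflexivity.
    + apply continuity_2d_pt_torus_inner, (proj2 (proj2 Hf dS)).
  - apply filter_forall. intros y. apply ex_RInt_torus_outer, (proj1 Hf).
Qed.

Lemma torus_int_pD_dX_periodic T f s : C1_3 f ->
  (forall s t x, f s t (x + 2 * PI) = f s t x) -> torus_int T (pD dX f s) = 0.
Proof.
  intros [Hf Hd] Hper. destruct (Hd dX) as [Hex Hc]. unfold torus_int.
  rewrite (RInt_ext _ (fun _ => 0)); [rewrite RInt_const; apply Rmult_0_r|].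
  intros t _. simpl. rewrite (RInt_Derive (fun u => f s t u)).
  - rewrite <- (Rplus_0_l (2 * PI)) at 1. rewrite Hper. ring.
  - intros x _. apply (Hex s t x).
  - intros x _. apply (continuous3_x (pD dX f)), Hc.
Qed.

Lemma torus_int_pD_dT_periodic T f s : C1_3 f ->
  (forall s t x, f s (t + T) x = f s t x) -> torus_int T (pD dT f s) = 0.
Proof.
  intros Hf Hper. unfold torus_int.
  set (h := fun t => RInt (fun x => f s t x) 0 (2 * PI)).
  assert (Hh : forall t, Derive h t = RInt (fun x => pD dT f s t x) 0 (2 * PI))
    by (intros; apply is_derive_unique, is_derive_torus_inner_t, Hf).
  rewrite (RInt_ext _ (Derive h)) by (intros; rewrite Hh; reflexivity).
  rewrite RInt_Derive.
  - unfold h. rewrite (RInt_ext (fun x => f s T x) (fun x => f s 0 x)); [ring|].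
    intros x _. rewrite <- (Rplus_0_l T) at 1. apply Hper.
  - intros t _. eexists. apply is_derive_torus_inner_t, Hf.
  - intros t _. apply continuous_ext with (f := fun t => RInt (fun x => pD dT f s t x) 0 (2 * PI)).
    + intros; rewrite Hh; reflexivity.
    + apply (continuity_2d_pt_snd (fun s t => RInt (fun x => pD dT f s t x) 0 (2 * PI))).
      apply continuity_2d_pt_torus_inner, (proj2 (proj2 Hf dT)).
Qed.

(** * The equation [d_s Y + M1 d_t Y + M2 d_x Y = 0] *)

Definition smooth4 (Y : nat -> R -> R -> R -> R) : Prop :=
  forall k, (k < 4)%nat -> smooth3 (Y k).

Definition periodic3 (T : R) (f : R -> R -> R -> R) : Prop :=
  forall s t x, f s (t + T) x = f s t x /\ f s t (x + 2 * PI) = f s t x.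

Definition periodic4 (T : R) (Y : nat -> R -> R -> R -> R) : Prop :=
  forall k, (k < 4)%nat -> periodic3 T (Y k).

Definition dot4 (A C : nat -> R -> R -> R -> R) : R -> R -> R -> R :=
  add3 (add3 (add3 (mul3 (A 0%nat) (C 0%nat)) (mul3 (A 1%nat) (C 1%nat)))
             (mul3 (A 2%nat) (C 2%nat))) (mul3 (A 3%nat) (C 3%nat)).

(* The [i]-th component of [M1 d_t Y + M2 d_x Y]. *)
Definition L_op (Y : nat -> R -> R -> R -> R) (i : nat) : R -> R -> R -> R :=
  match i with
  | 0%nat => add3 (scal3 (-1) (pD dT (Y 1%nat))) (pD dX (Y 2%nat))
  | 1%nat => add3 (pD dT (Y 0%nat)) (scal3 (-1) (pD dX (Y 3%nat)))
  | 2%nat => add3 (pD dT (Y 3%nat)) (scal3 (-1) (pD dX (Y 0%nat)))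
  | _ => add3 (scal3 (-1) (pD dT (Y 2%nat))) (pD dX (Y 1%nat))
  end.

Definition solves (Y : nat -> R -> R -> R -> R) : Prop :=
  forall i s t x, (i < 4)%nat -> pD dS (Y i) s t x = - L_op Y i s t x.

Ltac solve_smooth3 :=
  match goal with
  | H : smooth4 ?Y |- smooth3 (?Y ?k) => exact (H k ltac:(lia))
  end.

Ltac solve_ex_pD :=
  repeat match goal with
  | |- ex_pD _ (add3 _ _) => apply ex_pD_add3
  | |- ex_pD _ (mul3 _ _) => apply ex_pD_mul3
  | |- ex_pD _ (scal3 _ _) => apply ex_pD_scal3
  | |- ex_pD _ (pD _ _) => apply ex_pD_of_smooth3, smooth3_pD; solve_smooth3
  | |- ex_pD _ _ => apply ex_pD_of_smooth3; solve_smooth3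
  end.

Ltac solve_C1_3 :=
  repeat match goal with
  | |- C1_3 (add3 _ _) => apply C1_3_add3
  | |- C1_3 (mul3 _ _) => apply C1_3_mul3
  | |- C1_3 (scal3 _ _) => apply C1_3_scal3
  | |- C1_3 (pD ?d ?f) => apply (C1_3_iterD f (d :: nil)); solve_smooth3
  | |- C1_3 _ => apply C1_3_of_smooth3; solve_smooth3
  end.

Lemma solves_of_matrix_form Y :
  (forall i s t x, (i < 4)%nat ->
      pD dS (Y i) s t x
      + sum_f_R0 (fun j => M1 i j * pD dT (Y j) s t x) 3
      + sum_f_R0 (fun j => M2 i j * pD dX (Y j) s t x) 3 = 0) ->
  solves Y.
Proof.
  intros H i s t x Hi. pose proof (H i s t x Hi) as E.
  destruct i as [|[|[|[|i]]]]; try lia; simpl in E |- *; unfold add3, scal3; lra.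
Qed.

Lemma smooth4_pD_dS Y : smooth4 Y -> smooth4 (fun k => pD dS (Y k)).
Proof. intros H k Hk. apply smooth3_pD, H, Hk. Qed.

Lemma dot4_ge_0 A s t x : 0 <= dot4 A A s t x.
Proof.
  unfold dot4, add3, mul3.
  pose proof (Rle_0_sqr (A 0%nat s t x)). pose proof (Rle_0_sqr (A 1%nat s t x)).
  pose proof (Rle_0_sqr (A 2%nat s t x)). pose proof (Rle_0_sqr (A 3%nat s t x)).
  unfold Rsqr in *. lra.
Qed.

Lemma dot4_eq_0 A s t x : dot4 A A s t x = 0 -> forall k, (k < 4)%nat -> A k s t x = 0.
Proof.
  unfold dot4, add3, mul3. intros H k Hk.
  pose proof (Rle_0_sqr (A 0%nat s t x)). pose proof (Rle_0_sqr (A 1%nat s t x)).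
  pose proof (Rle_0_sqr (A 2%nat s t x)). pose proof (Rle_0_sqr (A 3%nat s t x)).
  unfold Rsqr in *. apply Rsqr_0_uniq. unfold Rsqr.
  destruct k as [|[|[|[|k]]]]; try lia; lra.
Qed.

Lemma pD_dot4 d A C : smooth4 A -> smooth4 C ->
  pD d (dot4 A C) = add3 (dot4 (fun k => pD d (A k)) C) (dot4 A (fun k => pD d (C k))).
Proof.
  intros HA HC. unfold dot4.
  rewrite !(pD_add3 d) by solve_ex_pD. rewrite !(pD_mul3 d) by solve_ex_pD.
  apply funext3. intros s t x. unfold add3, mul3. ring.
Qed.

Lemma C1_3_dot4 A C : smooth4 A -> smooth4 C -> C1_3 (dot4 A C).
Proof. intros HA HC. unfold dot4. solve_C1_3. Qed.

Lemma C1_3_L_op Y i : smooth4 Y -> C1_3 (L_op Y i).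
Proof. intros HY. destruct i as [|[|[|[|i]]]]; unfold L_op; solve_C1_3. Qed.

Lemma C1_3_dot4_L_op A C : smooth4 A -> smooth4 C ->
  C1_3 (dot4 A (L_op C)) /\ C1_3 (dot4 (L_op A) C).
Proof.
  intros HA HC. unfold dot4. split; solve_C1_3; apply C1_3_L_op; assumption.
Qed.

Lemma periodic3_add3 T f g : periodic3 T f -> periodic3 T g -> periodic3 T (add3 f g).
Proof. intros Hf Hg s t x. unfold add3. destruct (Hf s t x), (Hg s t x). split; congruence. Qed.

Lemma periodic3_mul3 T f g : periodic3 T f -> periodic3 T g -> periodic3 T (mul3 f g).
Proof. intros Hf Hg s t x. unfold mul3. destruct (Hf s t x), (Hg s t x). split; congruence. Qed.

Lemma periodic3_scal3 T c f : periodic3 T f -> periodic3 T (scal3 c f).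
Proof. intros Hf s t x. unfold scal3. destruct (Hf s t x). split; congruence. Qed.

Lemma periodic4_pD_dS T Y : periodic4 T Y -> periodic4 T (fun k => pD dS (Y k)).
Proof. intros H k Hk s t x. simpl. split; apply Derive_ext; intros u; apply H, Hk. Qed.

Ltac solve_periodic3 :=
  repeat first
    [ apply periodic3_add3 | apply periodic3_scal3 | apply periodic3_mul3
    | match goal with H : periodic4 _ ?Y |- periodic3 _ (?Y ?k) => exact (H k ltac:(lia)) end ].

(* [dot4 A (L_op C) - dot4 (L_op A) C] is the divergence of [(flux_t A C, flux_x A C)]:
   [L_op] is symmetric because [M1] and [M2] are antisymmetric. *)
Definition flux_t (A C : nat -> R -> R -> R -> R) : R -> R -> R -> R :=
  add3 (add3 (add3 (scal3 (-1) (mul3 (A 0%nat) (C 1%nat))) (mul3 (A 1%nat) (C 0%nat)))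
             (mul3 (A 2%nat) (C 3%nat))) (scal3 (-1) (mul3 (A 3%nat) (C 2%nat))).

Definition flux_x (A C : nat -> R -> R -> R -> R) : R -> R -> R -> R :=
  add3 (add3 (add3 (mul3 (A 0%nat) (C 2%nat)) (scal3 (-1) (mul3 (A 1%nat) (C 3%nat))))
             (scal3 (-1) (mul3 (A 2%nat) (C 0%nat)))) (mul3 (A 3%nat) (C 1%nat)).

Lemma dot4_L_op_divergence A C : smooth4 A -> smooth4 C ->
  add3 (dot4 A (L_op C)) (scal3 (-1) (dot4 (L_op A) C))
  = add3 (pD dT (flux_t A C)) (pD dX (flux_x A C)).
Proof.
  intros HA HC. unfold flux_t, flux_x.
  rewrite !(pD_add3 dT), !(pD_add3 dX) by solve_ex_pD.
  rewrite !(pD_scal3 dT), !(pD_scal3 dX).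
  rewrite !(pD_mul3 dT), !(pD_mul3 dX) by solve_ex_pD.
  apply funext3. intros s t x. unfold dot4, L_op, add3, scal3, mul3. ring.
Qed.

Lemma torus_int_dot4_L_op_sym T A C s : smooth4 A -> smooth4 C ->
  periodic4 T A -> periodic4 T C ->
  torus_int T (dot4 A (L_op C) s) = torus_int T (dot4 (L_op A) C s).
Proof.
  intros HA HC PA PC.
  assert (Ht : C1_3 (flux_t A C)) by (unfold flux_t; solve_C1_3).
  assert (Hx : C1_3 (flux_x A C)) by (unfold flux_x; solve_C1_3).
  assert (Pt : periodic3 T (flux_t A C)) by (unfold flux_t; solve_periodic3).
  assert (Px : periodic3 T (flux_x A C)) by (unfold flux_x; solve_periodic3).
  destruct (C1_3_dot4_L_op A C HA HC) as [[CAL _] [CLA _]].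
  assert (Hdiv : torus_int T (add3 (dot4 A (L_op C)) (scal3 (-1) (dot4 (L_op A) C)) s) = 0).
  { rewrite dot4_L_op_divergence by assumption.
    rewrite torus_int_add3 by apply (proj2 Ht dT) || apply (proj2 Hx dX).
    rewrite torus_int_pD_dT_periodic, torus_int_pD_dX_periodic by (auto; apply Pt || apply Px).
    ring. }
  rewrite torus_int_add3, torus_int_scal3 in Hdiv
    by (exact CAL || exact CLA || apply continuous3_scal, CLA).
  lra.
Qed.

Lemma pD_dS_L_op Y i s t x : smooth4 Y -> (i < 4)%nat ->
  pD dS (L_op Y i) s t x = L_op (fun k => pD dS (Y k)) i s t x.
Proof.
  intros HY Hi.
  destruct i as [|[|[|[|i]]]]; try lia; unfold L_op;
    rewrite (pD_add3 dS), (pD_scal3 dS) by solve_ex_pD; unfold add3, scal3;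
    rewrite ?pD_dS_dT_comm, ?pD_dS_dX_comm by solve_smooth3; reflexivity.
Qed.

Lemma solves_pD_dS Y : smooth4 Y -> solves Y -> solves (fun k => pD dS (Y k)).
Proof.
  intros HY HE i s t x Hi. cbv beta.
  rewrite <- pD_dS_L_op by assumption.
  assert (E : pD dS (Y i) = scal3 (-1) (L_op Y i)).
  { apply funext3. intros s' t' x'. unfold scal3. rewrite HE by assumption. ring. }
  rewrite E, pD_scal3. unfold scal3. ring.
Qed.

Lemma ex_pD_dot4 d A C : smooth4 A -> smooth4 C -> ex_pD d (dot4 A C).
Proof. intros HA HC. unfold dot4. solve_ex_pD. Qed.

Lemma dot4_comm A C : dot4 A C = dot4 C A.
Proof. apply funext3. intros s t x. unfold dot4, add3, mul3. ring. Qed.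

Lemma torus_int_dot4_pD_dS2 T Y s : smooth4 Y -> periodic4 T Y -> solves Y ->
  torus_int T (dot4 Y (fun k => pD dS (pD dS (Y k))) s)
  = torus_int T (dot4 (fun k => pD dS (Y k)) (fun k => pD dS (Y k)) s).
Proof.
  intros HY PY EY.
  set (V := fun k => pD dS (Y k)).
  assert (HV : smooth4 V) by (apply smooth4_pD_dS; auto).
  assert (EV : solves V) by (apply solves_pD_dS; auto).
  assert (PV : periodic4 T V) by (apply periodic4_pD_dS; auto).
  destruct (C1_3_dot4_L_op Y V HY HV) as [[CYLV _] [CLYV _]].
  assert (CVV : continuous3 (dot4 V V)) by apply (C1_3_dot4 V V HV HV).
  (* [d_s V = - L V] and [L Y = - V] *)
  assert (E1 : dot4 Y (fun k => pD dS (V k)) = scal3 (-1) (dot4 Y (L_op V))).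
  { apply funext3. intros s' t x. unfold dot4, add3, mul3, scal3.
    rewrite !(EV _ s' t x) by lia. ring. }
  assert (E2 : dot4 (L_op Y) V = scal3 (-1) (dot4 V V)).
  { apply funext3. intros s' t x. unfold dot4, add3, mul3, scal3, V.
    rewrite !(EY _ s' t x) by lia. ring. }
  change (fun k => pD dS (pD dS (Y k))) with (fun k => pD dS (V k)).
  rewrite E1, torus_int_scal3, (torus_int_dot4_L_op_sym T Y V), E2, torus_int_scal3
    by assumption.
  ring.
Qed.

Lemma energy_second_derivative_ge_0 T Y s : 0 < T -> smooth4 Y -> periodic4 T Y -> solves Y ->
  0 <= torus_int T (pD dS (pD dS (dot4 Y Y)) s).
Proof.
  intros HT HY PY EY.
  set (V := fun k => pD dS (Y k)).
  set (U := fun k => pD dS (V k)).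
  assert (HV : smooth4 V) by (apply smooth4_pD_dS; auto).
  assert (HU : smooth4 U) by (apply smooth4_pD_dS; auto).
  rewrite (pD_dot4 dS Y Y), (pD_add3 dS) by auto using ex_pD_dot4. fold V.
  rewrite (pD_dot4 dS V Y), (pD_dot4 dS Y V) by auto. fold U.
  rewrite (dot4_comm U Y).
  rewrite !torus_int_add3
    by (apply (C1_3_dot4 _ _ HY HU) || apply (C1_3_dot4 _ _ HV HV)
        || apply continuous3_plus; apply (C1_3_dot4 _ _ HY HU) || apply (C1_3_dot4 _ _ HV HV)).
  unfold U, V. rewrite torus_int_dot4_pD_dS2 by assumption.
  pose proof (torus_int_ge_0 T (dot4 V V) s (Rlt_le _ _ HT)
                (proj1 (C1_3_dot4 V V HV HV)) (dot4_ge_0 V s)).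
  unfold V in *. lra.
Qed.

(** * Nonnegative convex functions with finite integral over the line *)

Lemma nondecreasing_of_derive_ge_0 (f df : R -> R) a b :
  (forall s, is_derive f s (df s)) -> (forall s, a <= s <= b -> 0 <= df s) -> a <= b ->
  f a <= f b.
Proof.
  intros Hd Hpos Hab. destruct (MVT_gen f a b df) as [c [Hc E]].
  - intros x _. apply Hd.
  - intros x _. apply continuity_pt_filterlim.
    apply (@ex_derive_continuous R_AbsRing R_NormedModule). eexists. apply Hd.
  - rewrite Rmin_left, Rmax_right in Hc by lra.
    assert (0 <= df c * (b - a)) by (apply Rmult_le_pos; [apply Hpos | ]; lra). lra.
Qed.

Lemma RInt_ge_const (F : R -> R) c u v : (forall z, continuous F z) -> u <= v ->
  (forall s, u <= s <= v -> c <= F s) -> c * (v - u) <= RInt F u v.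
Proof.
  intros HF Huv Hc.
  assert (H : RInt (fun _ => c) u v <= RInt F u v).
  { apply RInt_le; auto using ex_RInt_continuous_everywhere, ex_RInt_const.
    intros; apply Hc; lra. }
  rewrite RInt_const in H. unfold scal in H; simpl in H; unfold mult in H; simpl in H. lra.
Qed.

Lemma is_RInt_gen_R_approx (F : R -> R) l : (forall z, continuous F z) ->
  is_RInt_gen F (Rbar_locally m_infty) (Rbar_locally p_infty) l ->
  exists A B, forall a b, a < A -> B < b -> Rabs (RInt F a b - l) < 1.
Proof.
  intros HF HI.
  destruct (HI (ball l (mkposreal 1 Rlt_0_1)) (locally_ball l _)) as [P Q [A HP] [B HQ] Hall].
  exists A, B. intros a b Ha Hb.
  destruct (Hall a b (HP a Ha) (HQ b Hb)) as [y [Hy Hball]].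
  simpl in Hy. rewrite (is_RInt_unique _ _ _ _ Hy). exact Hball.
Qed.

Lemma not_is_RInt_gen_R_ge_right (F : R -> R) l s0 c : (forall z, continuous F z) -> 0 < c ->
  is_RInt_gen F (Rbar_locally m_infty) (Rbar_locally p_infty) l ->
  ~ (forall s, s0 <= s -> c <= F s).
Proof.
  intros HF Hc HI Hge.
  destruct (is_RInt_gen_R_approx F l HF HI) as [A [B Happrox]].
  set (b1 := Rmax B s0 + 1). set (b2 := b1 + 3 / c).
  assert (Hb1 : B < b1 /\ s0 < b1)
    by (unfold b1; pose proof (Rmax_l B s0); pose proof (Rmax_r B s0); lra).
  assert (Hgap : c * (b2 - b1) = 3) by (unfold b2; field; lra).
  assert (Hpos : 0 < 3 / c) by (apply Rdiv_lt_0_compat; lra).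
  assert (Htail : c * (b2 - b1) <= RInt F b1 b2)
    by (apply RInt_ge_const; auto; [unfold b2; lra | intros; apply Hge; lra]).
  pose proof (Happrox (A - 1) b1 ltac:(lra) ltac:(lra)) as H1.
  pose proof (Happrox (A - 1) b2 ltac:(lra) ltac:(unfold b2; lra)) as H2.
  rewrite <- (RInt_Chasles F (A - 1) b1 b2) in H2 by auto using ex_RInt_continuous_everywhere.
  apply Rabs_def2 in H1. apply Rabs_def2 in H2. unfold plus in H2; simpl in H2. lra.
Qed.

Lemma not_is_RInt_gen_R_ge_left (F : R -> R) l s0 c : (forall z, continuous F z) -> 0 < c ->
  is_RInt_gen F (Rbar_locally m_infty) (Rbar_locally p_infty) l ->
  ~ (forall s, s <= s0 -> c <= F s).
Proof.
  intros HF Hc HI Hge.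
  destruct (is_RInt_gen_R_approx F l HF HI) as [A [B Happrox]].
  set (a1 := Rmin A s0 - 1). set (a2 := a1 - 3 / c).
  assert (Ha1 : a1 < A /\ a1 < s0)
    by (unfold a1; pose proof (Rmin_l A s0); pose proof (Rmin_r A s0); lra).
  assert (Hgap : c * (a1 - a2) = 3) by (unfold a2; field; lra).
  assert (Hpos : 0 < 3 / c) by (apply Rdiv_lt_0_compat; lra).
  assert (Htail : c * (a1 - a2) <= RInt F a2 a1)
    by (apply RInt_ge_const; auto; [unfold a2; lra | intros; apply Hge; lra]).
  pose proof (Happrox a1 (B + 1) ltac:(lra) ltac:(lra)) as H1.
  pose proof (Happrox a2 (B + 1) ltac:(unfold a2; lra) ltac:(lra)) as H2.
  rewrite <- (RInt_Chasles F a2 a1 (B + 1)) in H2 by auto using ex_RInt_continuous_everywhere.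
  apply Rabs_def2 in H1. apply Rabs_def2 in H2. unfold plus in H2; simpl in H2. lra.
Qed.

Lemma convex_ge_0_is_RInt_gen_R_eq_0 (F dF d2F : R -> R) l :
  (forall s, is_derive F s (dF s)) -> (forall s, is_derive dF s (d2F s)) ->
  (forall s, 0 <= d2F s) -> (forall s, 0 <= F s) ->
  is_RInt_gen F (Rbar_locally m_infty) (Rbar_locally p_infty) l ->
  forall s, F s = 0.
Proof.
  intros HF HdF Hd2F Hpos HI s0.
  destruct (Rle_lt_or_eq_dec 0 (F s0) (Hpos s0)) as [Hlt | Heq]; [exfalso | auto].
  assert (Hc : forall s, continuous F s).
  { intros. apply (@ex_derive_continuous R_AbsRing R_NormedModule). eexists. apply HF. }
  (* [F] is at least [F s0] on the half-line on which its tangent at [s0] does not decrease *)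
  destruct (Rle_or_lt 0 (dF s0)) as [Hup | Hdown].
  - apply (not_is_RInt_gen_R_ge_right F l s0 (F s0) Hc Hlt HI). intros s Hs.
    apply (nondecreasing_of_derive_ge_0 F dF s0 s HF); auto. intros u Hu.
    eapply Rle_trans; [exact Hup | apply (nondecreasing_of_derive_ge_0 dF d2F s0 u HdF); auto; lra].
  - apply (not_is_RInt_gen_R_ge_left F l s0 (F s0) Hc Hlt HI). intros s Hs.
    assert (- F s <= - F s0); [|lra].
    apply (nondecreasing_of_derive_ge_0 (fun u => - F u) (fun u => - dF u) s s0); auto.
    + intros u. apply (@is_derive_opp R_AbsRing R_NormedModule), HF.
    + intros u Hu. assert (dF u <= dF s0); [|lra].
      apply (nondecreasing_of_derive_ge_0 dF d2F u s0 HdF); auto; lra.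
Qed.

(** * Continuous functions with incommensurable periods *)

Definition irrational (r : R) : Prop :=
  forall (p : Z) (q : nat), (0 < q)%nat -> r <> IZR p / INR q.

Lemma irrational_of_irrationality_measure r mu :
  has_irrationality_measure r mu -> irrational r.
Proof.
  intros [_ Hglb] p q Hq E.
  assert (mu + 1 <= mu); [|lra].
  apply Hglb. intros rho [c [Hc Hall]]. exfalso.
  specialize (Hall p q Hq). rewrite E, Rminus_eq_0, Rabs_R0 in Hall.
  assert (0 < c / Rpower (INR q) rho) by (apply Rdiv_lt_0_compat; [exact Hc | apply exp_pos]).
  lra.
Qed.

Definition is_period (g : R -> R) (p : R) : Prop := forall y, g (y + p) = g y.

Lemma is_period_sub g p q : is_period g p -> is_period g q -> is_period g (p - q).
Proof.
  intros Hp Hq y. rewrite <- (Hq (y + (p - q))).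
  replace (y + (p - q) + q) with (y + p) by ring. apply Hp.
Qed.

Lemma is_period_0 g : is_period g 0.
Proof. intros y. rewrite Rplus_0_r. reflexivity. Qed.

Lemma is_period_opp g p : is_period g p -> is_period g (- p).
Proof.
  intros H. replace (- p) with (0 - p) by ring. apply is_period_sub; auto using is_period_0.
Qed.

Lemma is_period_add g p q : is_period g p -> is_period g q -> is_period g (p + q).
Proof.
  intros Hp Hq. replace (p + q) with (p - - q) by ring. auto using is_period_sub, is_period_opp.
Qed.

Lemma is_period_INR_mult g p : is_period g p -> forall n : nat, is_period g (INR n * p).
Proof.
  intros H n. induction n as [|n IH].
  - rewrite Rmult_0_l. apply is_period_0.
  - rewrite S_INR. replace ((INR n + 1) * p) with (INR n * p + p) by ring.
    apply is_period_add; auto.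
Qed.

Lemma is_period_IZR_mult g p : is_period g p -> forall z : Z, is_period g (IZR z * p).
Proof.
  intros H z. destruct (Z.le_ge_cases 0 z) as [Hz | Hz].
  - rewrite <- (Z2Nat.id z Hz), <- INR_IZR_INZ. apply is_period_INR_mult, H.
  - replace z with (- (- z))%Z by lia. rewrite opp_IZR, Ropp_mult_distr_l_reverse.
    apply is_period_opp. rewrite <- (Z2Nat.id (- z)) by lia. rewrite <- INR_IZR_INZ.
    apply is_period_INR_mult, H.
Qed.

Lemma exists_IZR_floor (y p : R) : 0 < p -> exists z : Z, 0 <= y - IZR z * p < p.
Proof.
  intros Hp. destruct (archimed (y / p)) as [H1 H2].
  exists (up (y / p) - 1)%Z. rewrite minus_IZR.
  assert (Ey : y = (y / p) * p) by (field; lra).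
  set (u := IZR (up (y / p))) in *. set (r := y / p) in *.
  split.
  - assert ((u - 1) * p <= r * p) by (apply Rmult_le_compat_r; lra). lra.
  - assert (r * p < u * p) by (apply Rmult_lt_compat_r; lra). lra.
Qed.

Lemma is_period_reduce g p : 0 < p -> is_period g p ->
  forall y, exists y0, 0 <= y0 < p /\ g y = g y0.
Proof.
  intros Hp Hg y. destruct (exists_IZR_floor y p Hp) as [z Hz].
  exists (y - IZR z * p). split; [exact Hz|].
  rewrite <- (is_period_IZR_mult g p Hg z (y - IZR z * p)). f_equal. ring.
Qed.

Lemma small_periods_const g : (forall y, continuous g y) ->
  (forall e, 0 < e -> exists p, 0 < p < e /\ is_period g p) -> forall y, g y = g 0.
Proof.
  intros Hc Hsmall y. apply Rminus_diag_uniq, Rabs_eq_0.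
  apply Rle_antisym; [| apply Rabs_pos]. apply Rnot_lt_le. intros He.
  destruct (proj1 (filterlim_locally _ _) (Hc 0) (mkposreal _ He)) as [d Hd].
  destruct (Hsmall d (cond_pos d)) as [p [Hp Hper]].
  destruct (is_period_reduce g p (proj1 Hp) Hper y) as [u [Hu Eu]].
  assert (Hball : ball 0 d u) by (change (Rabs (u - 0) < d); apply Rabs_def1; lra).
  specialize (Hd u Hball). change (Rabs (g u - g 0) < Rabs (g y - g 0)) in Hd.
  rewrite Eu in Hd. lra.
Qed.

Lemma positive_periods_glb g q : 0 < q -> is_period g q ->
  exists delta, (forall p, 0 < p -> is_period g p -> delta <= p) /\
    (forall b, (forall p, 0 < p -> is_period g p -> b <= p) -> b <= delta).
Proof.
  intros Hq Hper.
  set (E := fun x => 0 < - x /\ is_period g (- x)).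
  assert (HE1 : bound E) by (exists 0; intros x [Hx _]; lra).
  assert (HE2 : exists x, E x) by (exists (- q); unfold E; rewrite Ropp_involutive; auto).
  destruct (completeness E HE1 HE2) as [m [Hub Hleast]].
  exists (- m). split.
  - intros p Hp Hpp. assert (E (- p)) by (unfold E; rewrite Ropp_involutive; auto).
    specialize (Hub _ H). lra.
  - intros b Hb. assert (m <= - b); [|lra].
    apply Hleast. intros x [Hx Hxp]. specialize (Hb _ Hx Hxp). lra.
Qed.

Lemma discrete_periods_multiples g q : 0 < q -> is_period g q ->
  (exists e, 0 < e /\ forall p, 0 < p -> is_period g p -> e <= p) ->
  exists delta, 0 < delta /\ forall p, 0 < p -> is_period g p -> exists z : Z, p = IZR z * delta.
Proof.
  intros Hq Hper [e [He Hlow]].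
  destruct (positive_periods_glb g q Hq Hper) as [delta [Hlb Hglb]].
  assert (Hdelta : e <= delta) by (apply Hglb; auto).
  (* otherwise two periods in [(delta, 2 delta)] would differ by a period in [(0, delta)] *)
  assert (Hdp : is_period g delta).
  { apply NNPP. intros Hn.
    assert (Hp1 : exists p1, 0 < p1 /\ is_period g p1 /\ p1 < 2 * delta).
    { apply NNPP. intros Hn1. assert (2 * delta <= delta); [|lra].
      apply Hglb. intros p Hp Hpp. apply Rnot_lt_le. intros Hlt. apply Hn1. eauto. }
    destruct Hp1 as [p1 [Hp1 [Hpp1 Hp1d]]].
    assert (Hgt : delta < p1).
    { destruct (Rle_lt_or_eq_dec _ _ (Hlb p1 Hp1 Hpp1)) as [|Heq]; [auto | subst; contradiction]. }
    assert (Hp2 : exists p2, 0 < p2 /\ is_period g p2 /\ p2 < p1).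
    { apply NNPP. intros Hn2. assert (p1 <= delta); [|lra].
      apply Hglb. intros p Hp Hpp. apply Rnot_lt_le. intros Hlt. apply Hn2. eauto. }
    destruct Hp2 as [p2 [Hp2 [Hpp2 Hp21]]].
    assert (delta <= p2) by auto.
    assert (delta <= p1 - p2) by (apply Hlb; [lra | apply is_period_sub; auto]).
    lra. }
  exists delta. split; [lra|]. intros p Hp Hpp.
  destruct (exists_IZR_floor p delta ltac:(lra)) as [z Hz]. exists z.
  destruct (Rle_lt_or_eq_dec _ _ (proj1 Hz)) as [Hlt | Heq]; [exfalso | lra].
  assert (delta <= p - IZR z * delta); [|lra].
  apply Hlb; [exact Hlt | apply is_period_sub; auto using is_period_IZR_mult].
Qed.

Lemma two_periods_irrational_const g p q : 0 < p -> 0 < q -> (forall y, continuous g y) ->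
  is_period g p -> is_period g q -> irrational (p / q) -> forall y, g y = g 0.
Proof.
  intros Hp Hq Hc Hpp Hpq Hirr.
  apply small_periods_const; [exact Hc|].
  apply NNPP. intros Hnot.
  destruct (discrete_periods_multiples g q Hq Hpq) as [delta [Hdelta Hmult]].
  { apply not_all_ex_not in Hnot. destruct Hnot as [e He].
    apply imply_to_and in He. destruct He as [He Hno].
    exists e. split; [exact He|]. intros r Hr Hpr. apply Rnot_lt_le. intros Hlt. eauto. }
  destruct (Hmult p Hp Hpp) as [m Hm]. destruct (Hmult q Hq Hpq) as [n Hn].
  assert (Hn0 : (0 < n)%Z).
  { apply lt_0_IZR. apply Rnot_le_lt. intros Hle.
    assert (IZR n * delta <= 0) by (apply Rmult_le_0_r; lra). lra. }
  apply (Hirr m (Z.to_nat n)); [lia|].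
  rewrite INR_IZR_INZ, Z2Nat.id, Hm, Hn by lia. field.
  repeat split; try lra; apply not_0_IZR; lia.
Qed.

(** * Transport along characteristics *)

Lemma Rabs_sub_le_of_between a b c : Rmin a b <= c <= Rmax a b -> Rabs (c - a) <= Rabs (b - a).
Proof.
  unfold Rmin, Rmax. destruct (Rle_dec a b); intros [H1 H2];
    unfold Rabs; repeat destruct Rcase_abs; lra.
Qed.

Lemma differentiable_pt_lim_of_partials (f : R -> R -> R) x y :
  (forall u v, ex_derive (fun z => f z v) u) -> (forall u v, ex_derive (fun z => f u z) v) ->
  continuity_2d_pt (fun u v => Derive (fun z => f z v) u) x y ->
  continuity_2d_pt (fun u v => Derive (fun z => f u z) v) x y ->
  differentiable_pt_lim f x y (Derive (fun z => f z y) x) (Derive (fun z => f x z) y).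
Proof.
  intros H1 H2 C1 C2 eps.
  assert (e2 : 0 < eps / 2) by (pose proof (cond_pos eps); lra).
  destruct (C1 (mkposreal _ e2)) as [d1 Hd1]. destruct (C2 (mkposreal _ e2)) as [d2 Hd2].
  assert (Hd : 0 < Rmin d1 d2) by (apply Rmin_pos; apply cond_pos).
  exists (mkposreal _ Hd). simpl. intros u v Hu Hv.
  pose proof (Rmin_l d1 d2). pose proof (Rmin_r d1 d2).
  (* mean value theorem along [x -> u] at height [v], then along [y -> v] at abscissa [x] *)
  destruct (MVT_gen (fun z => f z v) x u (fun z => Derive (fun w => f w v) z)) as [c [Hc Ec]].
  { intros z _. exact (Derive_correct _ _ (H1 z v)). }
  { intros z _. apply continuity_pt_filterlim.
    exact (@ex_derive_continuous R_AbsRing R_NormedModule _ z (H1 z v)). }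
  destruct (MVT_gen (fun z => f x z) y v (fun z => Derive (fun w => f x w) z)) as [c' [Hc' Ec']].
  { intros z _. exact (Derive_correct _ _ (H2 x z)). }
  { intros z _. apply continuity_pt_filterlim.
    exact (@ex_derive_continuous R_AbsRing R_NormedModule _ z (H2 x z)). }
  simpl in Ec, Ec'. apply Rabs_sub_le_of_between in Hc. apply Rabs_sub_le_of_between in Hc'.
  set (ex := Derive (fun w => f w v) c - Derive (fun z => f z y) x).
  set (ey := Derive (fun w => f x w) c' - Derive (fun z => f x z) y).
  assert (Kx : Rabs ex < eps / 2) by (apply (Hd1 c v); lra).
  assert (Ky : Rabs ey < eps / 2) by (apply (Hd2 x c'); [apply Rabs_minus_diag_lt | lra]).
  replace (f u v - f x y
           - (Derive (fun z => f z y) x * (u - x) + Derive (fun z => f x z) y * (v - y)))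
    with (ex * (u - x) + ey * (v - y))
    by (replace (f u v - f x y) with ((f u v - f x v) + (f x v - f x y)) by ring;
        rewrite Ec, Ec'; unfold ex, ey; ring).
  set (m := Rmax (Rabs (u - x)) (Rabs (v - y))).
  assert (Rabs ex * Rabs (u - x) <= eps / 2 * m)
    by (apply Rmult_le_compat; try apply Rabs_pos; [lra | apply Rmax_l]).
  assert (Rabs ey * Rabs (v - y) <= eps / 2 * m)
    by (apply Rmult_le_compat; try apply Rabs_pos; [lra | apply Rmax_r]).
  eapply Rle_trans; [apply Rabs_triang|]. rewrite !Rabs_mult. lra.
Qed.

Lemma constant_along_characteristics (u : R -> R -> R) a :
  (forall t x, ex_derive (fun z => u z x) t) -> (forall t x, ex_derive (fun z => u t z) x) ->
  (forall t x, continuity_2d_pt (fun t x => Derive (fun z => u z x) t) t x) ->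
  (forall t x, continuity_2d_pt (fun t x => Derive (fun z => u t z) x) t x) ->
  (forall t x, Derive (fun z => u z x) t = a * Derive (fun z => u t z) x) ->
  forall t x, u t x = u 0 (x + a * t).
Proof.
  intros Ht Hx Ct Cx Heq t x.
  set (c := x + a * t).
  set (w := fun tau => u tau (c - a * tau)).
  assert (Hw : forall tau, is_derive w tau 0).
  { intros tau. apply is_derive_Reals.
    replace 0 with (Derive (fun z => u z (c - a * tau)) tau * 1
                    + Derive (fun z => u tau z) (c - a * tau) * (- a)) by (rewrite Heq; ring).
    apply (derivable_pt_lim_comp_2d u (fun tau => tau) (fun tau => c - a * tau)).
    - apply differentiable_pt_lim_of_partials; auto.
    - apply derivable_pt_lim_id.
    - apply is_derive_Reals. auto_derive; [exact I | ring]. }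
  destruct (MVT_gen w 0 t (fun _ => 0)) as [c0 [_ Ec0]].
  { intros; apply Hw. }
  { intros z _. apply continuity_pt_filterlim.
    exact (@ex_derive_continuous R_AbsRing R_NormedModule w z (ex_intro _ 0 (Hw z))). }
  unfold w in Ec0. replace (c - a * t) with x in Ec0 by (unfold c; ring).
  replace (c - a * 0) with c in Ec0 by ring. lra.
Qed.

Lemma transport_periodic_const T f s a : 0 < T -> (a = 1 \/ a = -1) -> C1_3 f ->
  periodic3 T f -> irrational (2 * PI / T) ->
  (forall t x, pD dT f s t x = a * pD dX f s t x) -> forall t x, f s t x = f s 0 0.
Proof.
  intros HT Ha [Hc Hd] Hper Hirr Heq.
  destruct (Hd dT) as [EdT CdT]. destruct (Hd dX) as [EdX CdX].
  assert (Hline : forall t x, f s t x = f s 0 (x + a * t)).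
  { apply (constant_along_characteristics (f s) a).
    - intros t x. apply (EdT s t x).
    - intros t x. apply (EdX s t x).
    - intros t x. apply (continuous3_tx (pD dT f)), CdT.
    - intros t x. apply (continuous3_tx (pD dX f)), CdX.
    - exact Heq. }
  set (g := fun y => f s 0 y).
  assert (H2PI : is_period g (2 * PI)) by (intros y; apply Hper).
  assert (HaT : is_period g (a * T)).
  { intros y. unfold g. rewrite <- Hline, <- (Rplus_0_l T) at 1. apply Hper. }
  assert (HgT : is_period g T).
  { destruct Ha as [-> | ->]; [rewrite Rmult_1_l in HaT | ]; [exact HaT|].
    replace T with (- (-1 * T)) by ring. apply is_period_opp, HaT. }
  intros t x. rewrite Hline.
  apply (two_periods_irrational_const g (2 * PI) T two_PI_gt_0 HT); auto.
  intros y. apply continuous3_x, Hc.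
Qed.

Lemma coupled_transport_const T A B s : 0 < T -> C1_3 A -> C1_3 B ->
  periodic3 T A -> periodic3 T B -> irrational (2 * PI / T) ->
  (forall t x, pD dT A s t x = pD dX B s t x) -> (forall t x, pD dT B s t x = pD dX A s t x) ->
  forall t x, A s t x = A s 0 0.
Proof.
  intros HT HA HB PA PB Hirr HAB HBA t x.
  destruct (proj2 HA dT), (proj2 HA dX), (proj2 HB dT), (proj2 HB dX).
  (* [A + B] and [A - B] are constant along the lines [x + t = c] and [x - t = c] *)
  assert (Hplus : forall t x, add3 A B s t x = add3 A B s 0 0).
  { apply transport_periodic_const with T 1; auto using C1_3_add3, periodic3_add3.
    intros t' x'. rewrite (pD_add3 dT), (pD_add3 dX) by assumption. unfold add3.
    rewrite HAB, HBA. ring. }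
  assert (Hminus : forall t x, add3 A (scal3 (-1) B) s t x = add3 A (scal3 (-1) B) s 0 0).
  { apply transport_periodic_const with T (-1);
      auto using C1_3_add3, C1_3_scal3, periodic3_add3, periodic3_scal3.
    intros t' x'. rewrite (pD_add3 dT), (pD_add3 dX) by auto using ex_pD_scal3.
    rewrite (pD_scal3 dT), (pD_scal3 dX). unfold add3, scal3.
    rewrite HAB, HBA. ring. }
  specialize (Hplus t x). specialize (Hminus t x). unfold add3, scal3 in Hplus, Hminus. lra.
Qed.

Lemma L_op_kernel_const T Y : 0 < T -> smooth4 Y -> periodic4 T Y -> irrational (2 * PI / T) ->
  (forall i s t x, (i < 4)%nat -> L_op Y i s t x = 0) ->
  forall k s t x, (k < 4)%nat -> Y k s t x = Y k s 0 0.
Proof.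
  intros HT HY PY Hirr HL k s t x Hk.
  assert (HC : forall k, (k < 4)%nat -> C1_3 (Y k)) by (intros; apply C1_3_of_smooth3; auto).
  pose proof (fun t x => HL 0%nat s t x ltac:(lia)) as L0.
  pose proof (fun t x => HL 1%nat s t x ltac:(lia)) as L1.
  pose proof (fun t x => HL 2%nat s t x ltac:(lia)) as L2.
  pose proof (fun t x => HL 3%nat s t x ltac:(lia)) as L3.
  simpl in L0, L1, L2, L3. unfold add3, scal3 in L0, L1, L2, L3.
  destruct k as [|[|[|[|k]]]]; try lia;
    [ apply (coupled_transport_const T _ (Y 3%nat))
    | apply (coupled_transport_const T _ (Y 2%nat))
    | apply (coupled_transport_const T _ (Y 1%nat))
    | apply (coupled_transport_const T _ (Y 0%nat)) ];
    first [ exact HT | exact Hirr | apply HC; lia | apply PY; lia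
          | intros t' x'; unfold pD; specialize (L0 t' x'); specialize (L1 t' x');
            specialize (L2 t' x'); specialize (L3 t' x'); lra ].
Qed.

(** * Solutions of finite energy *)

Lemma torus_int_eq_0_ge_0 T f s : 0 < T -> continuous3 f -> periodic3 T f ->
  (forall t x, 0 <= f s t x) -> torus_int T (f s) = 0 -> forall t x, f s t x = 0.
Proof.
  intros HT Hc Hper Hpos H0 t x.
  destruct (is_period_reduce (fun t => f s t x) T HT (fun y => proj1 (Hper s y x)) t)
    as [t0 [Ht0 Et]].
  destruct (is_period_reduce (fun x => f s t0 x) (2 * PI) two_PI_gt_0
              (fun y => proj2 (Hper s t0 y)) x) as [x0 [Hx0 Ex]].
  simpl in Et, Ex. rewrite Et, Ex.
  destruct (Rle_lt_or_eq_dec _ _ (Hpos t0 x0)) as [Hlt | Heq]; [exfalso | auto].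
  pose proof (torus_int_gt_0 T f s t0 x0 HT Hc Hpos ltac:(lra) ltac:(lra) Hlt). lra.
Qed.

Lemma solution_finite_energy_eq_0 T Y : 0 < T -> smooth4 Y -> periodic4 T Y -> solves Y ->
  ex_RInt_gen (fun s => torus_int T (dot4 Y Y s)) (Rbar_locally m_infty) (Rbar_locally p_infty) ->
  forall k s t x, (k < 4)%nat -> Y k s t x = 0.
Proof.
  intros HT HY PY EY [l Hl] k s t x Hk.
  pose proof (C1_3_dot4 Y Y HY HY) as C1.
  assert (C2 : C1_3 (pD dS (dot4 Y Y))).
  { rewrite pD_dot4 by assumption. apply C1_3_add3; apply C1_3_dot4; auto using smooth4_pD_dS. }
  assert (E0 : forall s, torus_int T (dot4 Y Y s) = 0).
  { apply (convex_ge_0_is_RInt_gen_R_eq_0 _ (fun s => torus_int T (pD dS (dot4 Y Y) s))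
             (fun s => torus_int T (pD dS (pD dS (dot4 Y Y)) s)) l); auto.
    - intros; apply is_derive_torus_int, C1.
    - intros; apply is_derive_torus_int, C2.
    - intros; apply energy_second_derivative_ge_0; auto.
    - intros; apply torus_int_ge_0; [lra | apply C1 | apply dot4_ge_0]. }
  apply (dot4_eq_0 Y s t x); [|exact Hk].
  apply (torus_int_eq_0_ge_0 T (dot4 Y Y) s HT (proj1 C1)); auto using dot4_ge_0.
  unfold dot4. solve_periodic3.
Qed.

Lemma torus_int_const_eq_0 T c (f : R -> R -> R) : 0 < T ->
  (forall t x, f t x = c) -> torus_int T f = 0 -> c = 0.
Proof.
  intros HT Hf H0. pose proof two_PI_gt_0.
  replace f with (fun _ _ : R => c) in H0
    by (do 2 (apply functional_extensionality; intro); symmetry; apply Hf).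
  rewrite torus_int_const in H0.
  destruct (Rmult_integral _ _ H0) as [H1 | H1]; [destruct (Rmult_integral _ _ H1) |]; lra.
Qed.

Lemma Dtx_zero a b : Dtx a b (fun _ _ _ => 0) = (fun _ _ _ => 0).
Proof.
  assert (Hiter : forall d n, Nat.iter n (pD d) (fun _ _ _ => 0) = (fun _ _ _ : R => 0)).
  { intros d n. induction n as [|n IH]; [reflexivity|]. simpl. rewrite IH.
    apply funext3. intros. destruct d; simpl; apply Derive_const. }
  unfold Dtx. rewrite !Hiter. reflexivity.
Qed.

Theorem lemma3p2
  (T : R) (HT : 0 < T)
  (Hirr : has_irrationality_measure (2 * PI / T) 2)
  (Z : nat -> R -> R -> R -> R)   (* components Z 0, ..., Z 3 of Z~ *)
  (Hsmooth : forall k, (k < 4)%nat -> smooth3 (Z k))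
  (Hper_t : forall k s t x, (k < 4)%nat -> Z k s (t + T) x = Z k s t x)
  (Hper_x : forall k s t x, (k < 4)%nat -> Z k s t (x + 2 * PI) = Z k s t x)
  (Heq : forall i s t x, (i < 4)%nat ->
      pD dS (Z i) s t x
      + sum_f_R0 (fun j => M1 i j * pD dT (Z j) s t x) 3
      + sum_f_R0 (fun j => M2 i j * pD dX (Z j) s t x) 3 = 0)
  (Henergy : ex_RInt_gen
      (fun s => torus_int T (fun t x =>
                  sum_f_R0 (fun k => (pD dS (Z k) s t x) ^ 2) 3))
      (Rbar_locally m_infty) (Rbar_locally p_infty))
  (Hmean : forall k s, (k < 4)%nat -> torus_int T (fun t x => Z k s t x) = 0) :
  forall k (a b : nat), (k < 4)%nat ->
    forall eps, 0 < eps -> exists S, forall s, S <= s ->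
      forall t x, Rabs (Dtx a b (Z k) s t x) < eps.
Proof.
  assert (HZ : smooth4 Z) by exact Hsmooth.
  assert (PZ : periodic4 T Z) by (intros k Hk s t x; auto).
  assert (EZ : solves Z) by (apply solves_of_matrix_form, Heq).
  assert (HdZ : forall k s t x, (k < 4)%nat -> pD dS (Z k) s t x = 0).
  { apply (solution_finite_energy_eq_0 T);
      auto using smooth4_pD_dS, periodic4_pD_dS, solves_pD_dS.
    eapply ex_RInt_gen_ext_eq; [| exact Henergy]. intros s. cbv beta. f_equal.
    do 2 (apply functional_extensionality; intro).
    unfold dot4, add3, mul3. simpl. ring. }
  assert (Hconst : forall k s t x, (k < 4)%nat -> Z k s t x = Z k s 0 0).
  { apply (L_op_kernel_const T Z HT HZ PZ (irrational_of_irrationality_measure _ _ Hirr)).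
    intros i s t x Hi. rewrite <- (Ropp_involutive (L_op Z i s t x)), <- EZ, HdZ by exact Hi.
    apply Ropp_0. }
  assert (HZ0 : forall k, (k < 4)%nat -> Z k = (fun _ _ _ => 0)).
  { intros k Hk. apply funext3. intros s t x. rewrite Hconst by exact Hk.
    apply (torus_int_const_eq_0 T _ (fun t x => Z k s t x) HT); auto. }
  intros k a b Hk eps Heps. exists 0. intros s _ t x.
  rewrite HZ0, Dtx_zero, Rabs_R0 by exact Hk. exact Heps.
Qed.
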